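(* Let $c>0$ and $\gamma>0$, and define the hybrid ordinary-Cauchy (HOC) function $l_{\gamma,c}:\mathbb{R}\to\mathbb{R}$ by $$l_{\gamma,c}(x)=\begin{cases} x^2/2, & |x|\le c,\\ \frac{\gamma^2+c^2}{2}\ln\!\big(1+(x/\gamma)^2\big)+b, & |x|>c,\end{cases}\qquad b=\frac{c^2}{2}-\frac{\gamma^2+c^2}{2}\ln\!\big(1+(c/\gamma)^2\big).$$ Define the (extended-real-valued) implicit regularizer $\varphi_{\gamma,c}(y)=\sup_{t\in\mathbb{R}}\big[l_{\gamma,c}(t)-\tfrac{(t-y)^2}{2}\big]$. Then for every $x\in\mathbb{R}$, $$l_{\gamma,c}(x)=\min_{y\in\mathbb{R}}\ \frac{(x-y)^2}{2}+\varphi_{\gamma,c}(y),$$ and this minimum is attained uniquely at $$y^\star=\max\Big\{0,\ |x|-\frac{(\gamma^2+c^2)|x|}{\gamma^2+x^2}\Big\}\cdot\operatorname{sign}(x).$$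
   Context: $\operatorname{sign}(x)$ denotes the sign of $x$ (with $\operatorname{sign}(0)=0$). *)

From HB Require Import structures.
From mathcomp Require Import all_boot all_order all_algebra.
From mathcomp Require Import all_classical all_reals all_analysis.
Set Implicit Arguments. Unset Strict Implicit. Unset Printing Implicit Defensive.
Import Order.TTheory GRing.Theory Num.Theory.
Local Open Scope classical_set_scope.
Local Open Scope ring_scope.

Section HOC.
Variable R : realType.

Definition hoc_b (gamma c : R) : R :=
  c ^+ 2 / 2 - (gamma ^+ 2 + c ^+ 2) / 2 * ln (1 + (c / gamma) ^+ 2).

Definition hoc (gamma c : R) (x : R) : R :=
  if `|x| <= c then x ^+ 2 / 2
  else (gamma ^+ 2 + c ^+ 2) / 2 * ln (1 + (x / gamma) ^+ 2) + hoc_b gamma c.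

Definition hoc_reg (gamma c : R) (y : R) : \bar R :=
  ereal_sup [set (hoc gamma c t - (t - y) ^+ 2 / 2)%:E | t in [set: R]].

Definition hoc_argmin (gamma c : R) (x : R) : R :=
  Num.max 0 (`|x| - (gamma ^+ 2 + c ^+ 2) * `|x| / (gamma ^+ 2 + x ^+ 2)) * Num.sg x.

End HOC.

From HB Require Import structures.
From mathcomp Require Import all_boot all_order all_algebra.
From mathcomp Require Import all_classical all_reals all_analysis.
From mathcomp Require Import ring lra.
(* With h t := t^2/2 - l t one has phi y + y^2/2 = sup_t (t y - h t), the convex
   conjugate of h.  Hence the envelope identity at y* says that y* is a
   subgradient of h at x, and uniqueness of the minimiser follows from a quadratic
   upper bound h t <= h x + y* (t - x) + M (t - x)^2.  Here h vanishes on [-c, c],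
   while for |t| > c it is t^2/2 - (gamma^2 + c^2)/2 ln(gamma^2 + t^2) + const,
   whose derivative is exactly y*; both bounds follow from
   1 - 1/r <= ln r <= r - 1, and the two branches glue because h and y* vanish at
   t = +-c. *)

Set Implicit Arguments. Unset Strict Implicit. Unset Printing Implicit Defensive.
Import Order.TTheory GRing.Theory Num.Theory.
Local Open Scope ring_scope.

Section ProxReg.
Variable R : realType.

Definition prox_reg (l : R -> R) (y : R) : \bar R :=
  ereal_sup [set (l t - (t - y) ^+ 2 / 2)%:E | t in [set: R]].

Variables (l : R -> R) (x y0 : R).

Lemma prox_reg_subgradient :
  (forall t, x ^+ 2 / 2 - l x + y0 * (t - x) <= t ^+ 2 / 2 - l t) ->
  (((x - y0) ^+ 2 / 2)%:E + prox_reg l y0 = (l x)%:E)%E.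
Proof.
move=> subgrad.
have -> : prox_reg l y0 = (l x - (x - y0) ^+ 2 / 2)%:E.
  apply/eqP; rewrite eq_le; apply/andP; split.
    apply: ge_ereal_sup => _ [t _ <-]; rewrite lee_fin.
    have := subgrad t; lra.
  by apply: ereal_sup_ubound; exists x.
by rewrite -EFinD; congr EFin; ring.
Qed.

Lemma prox_reg_strict (M : R) : 0 < M ->
  (forall t, t ^+ 2 / 2 - l t <= x ^+ 2 / 2 - l x + y0 * (t - x) + M * (t - x) ^+ 2) ->
  forall y, y <> y0 -> ((l x)%:E < ((x - y) ^+ 2 / 2)%:E + prox_reg l y)%E.
Proof.
move=> M_gt0 upper y neq_y.
(* Moving from x by d towards y gains (y - y0) d - M d^2, maximal at this d. *)
pose d := (y - y0) / (2 * M).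
have gain : (y - y0) * d - M * d ^+ 2 = (y - y0) ^+ 2 / (4 * M).
  by rewrite /d; field; rewrite gt_eqF.
have gain_gt0 : 0 < (y - y0) ^+ 2 / (4 * M).
  apply: divr_gt0; last by rewrite mulr_gt0.
  by rewrite lt0r sqr_ge0 andbT sqrf_eq0 subr_eq0; apply/eqP.
have reg_ge : ((l (x + d) - (x + d - y) ^+ 2 / 2)%:E <= prox_reg l y)%E.
  by apply: ereal_sup_ubound; exists (x + d).
apply: lt_le_trans (leeD2l _ reg_ge); rewrite -EFinD lte_fin.
have := upper (x + d); rewrite (_ : x + d - x = d); last by ring.
clearbody d; lra.
Qed.

End ProxReg.

Lemma lnB_le (R : realType) (a b : R) : 0 < a -> 0 < b -> ln a - ln b <= a / b - 1.
Proof.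
move=> a_gt0 b_gt0; rewrite -ln_div ?posrE //.
have ab_gt0 : 0 < a / b by rewrite divr_gt0.
by have := @le_ln1Dx R (a / b - 1); rewrite [1 + _]addrC subrK; apply; lra.
Qed.

Lemma normr_le_sqr (R : realDomainType) (c t : R) : 0 <= c ->
  (`|t| <= c) = (t ^+ 2 <= c ^+ 2).
Proof. by move=> c_ge0; rewrite -(real_normK (num_real t)) ler_pXn2r ?nnegrE. Qed.

Section HOC.
Variables (R : realType) (g c : R).
Hypotheses (g_gt0 : 0 < g) (c_gt0 : 0 < c).
Let c_ge0 : 0 <= c := ltW c_gt0.

Local Notation K := (g ^+ 2 + c ^+ 2).

Definition tail_gap (t : R) : R :=
  t ^+ 2 / 2 - (K / 2 * ln (1 + (t / g) ^+ 2) + hoc_b g c).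

Definition tail_slope (x : R) : R := x - K * x / (g ^+ 2 + x ^+ 2).

Definition tail_curv : R := 1 / 2 + 3 * K / (2 * g ^+ 2).

Definition hoc_gap (t : R) : R := t ^+ 2 / 2 - hoc g c t.

Lemma gD_sqr_gt0 (x : R) : 0 < g ^+ 2 + x ^+ 2.
Proof. by rewrite ltr_pwDl ?sqr_ge0 ?exprn_gt0. Qed.

Lemma tail_gapB (t x : R) : tail_gap t - tail_gap x =
  (t ^+ 2 - x ^+ 2) / 2 - K / 2 * (ln (g ^+ 2 + t ^+ 2) - ln (g ^+ 2 + x ^+ 2)).
Proof.
have g2_gt0 : 0 < g ^+ 2 by rewrite exprn_gt0.
have cauchyE y : 1 + (y / g) ^+ 2 = (g ^+ 2 + y ^+ 2) / g ^+ 2.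
  by rewrite expr_div_n; field; rewrite gt_eqF.
rewrite /tail_gap !cauchyE !ln_div ?posrE ?gD_sqr_gt0 //; ring.
Qed.

Lemma tail_gap_subgradient (t x : R) : c ^+ 2 <= x ^+ 2 ->
  tail_gap x + tail_slope x * (t - x) <= tail_gap t.
Proof.
move=> cx.
have lnB := lnB_le (gD_sqr_gt0 t) (gD_sqr_gt0 x).
have K2_ge0 : 0 <= K / 2 by rewrite divr_ge0 ?ltW ?gD_sqr_gt0.
have := ler_wpM2l K2_ge0 lnB.
have excess : (t ^+ 2 - x ^+ 2) / 2 - K / 2 * ((g ^+ 2 + t ^+ 2) / (g ^+ 2 + x ^+ 2) - 1)
    - tail_slope x * (t - x)
    = (t - x) ^+ 2 / 2 * ((x ^+ 2 - c ^+ 2) / (g ^+ 2 + x ^+ 2)).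
  by rewrite /tail_slope; field; rewrite gt_eqF ?gD_sqr_gt0.
have excess_ge0 : 0 <= (t - x) ^+ 2 / 2 * ((x ^+ 2 - c ^+ 2) / (g ^+ 2 + x ^+ 2)).
  by rewrite mulr_ge0 ?divr_ge0 ?sqr_ge0 ?subr_ge0 // ltW ?gD_sqr_gt0.
have := tail_gapB t x; lra.
Qed.

Lemma tail_gap_c (x : R) : x ^+ 2 = c ^+ 2 -> tail_gap x = 0.
Proof. by move=> x2; rewrite /tail_gap /hoc_b !expr_div_n x2; ring. Qed.

Lemma tail_slope_c (x : R) : x ^+ 2 = c ^+ 2 -> tail_slope x = 0.
Proof. by move=> x2; rewrite /tail_slope x2; field; rewrite gt_eqF ?gD_sqr_gt0. Qed.

Lemma tail_gap_ge0 (t : R) : 0 <= tail_gap t.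
Proof.
have := tail_gap_subgradient t (lexx (c ^+ 2)).
by rewrite tail_gap_c ?tail_slope_c ?mul0r ?addr0.
Qed.

Lemma tail_curv_gt0 : 0 < tail_curv.
Proof. by rewrite addr_gt0 ?divr_gt0 ?mulr_gt0 ?exprn_gt0 ?gD_sqr_gt0. Qed.

Lemma tail_gap_upper (t x : R) :
  tail_gap t <= tail_gap x + tail_slope x * (t - x) + tail_curv * (t - x) ^+ 2.
Proof.
have lnB := lnB_le (gD_sqr_gt0 x) (gD_sqr_gt0 t).
have K2_ge0 : 0 <= K / 2 by rewrite divr_ge0 ?ltW ?gD_sqr_gt0.
have := ler_wpM2l K2_ge0 lnB.
have At := gD_sqr_gt0 t; have Ax := gD_sqr_gt0 x; have g2_gt0 : 0 < g ^+ 2 by rewrite exprn_gt0.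
set q := (2 * x * t + x ^+ 2 - g ^+ 2) / ((g ^+ 2 + x ^+ 2) * (g ^+ 2 + t ^+ 2)).
have excess : (t ^+ 2 - x ^+ 2) / 2 + K / 2 * ((g ^+ 2 + x ^+ 2) / (g ^+ 2 + t ^+ 2) - 1)
    - tail_slope x * (t - x) = (t - x) ^+ 2 / 2 + K * (t - x) ^+ 2 / 2 * q.
  by rewrite /tail_slope /q; field; rewrite !gt_eqF.
have q_le : q <= 3 / g ^+ 2.
  rewrite /q ler_pdivrMr ?mulr_gt0 // [X in _ <= X]mulrAC ler_pdivlMr //.
  rewrite -subr_ge0 (_ : _ - _ = (g * (x - t)) ^+ 2 + 4 * (g ^+ 2) ^+ 2
      + 2 * (g * t) ^+ 2 + (g * x) ^+ 2 + 3 * (x * t) ^+ 2); last by ring.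
  by rewrite !addr_ge0 ?sqr_ge0 // mulr_ge0 ?sqr_ge0.
have Kt_ge0 : 0 <= K * (t - x) ^+ 2 / 2.
  by rewrite divr_ge0 // mulr_ge0 ?sqr_ge0 // ltW ?gD_sqr_gt0.
have := ler_wpM2l Kt_ge0 q_le.
have curvE : tail_curv * (t - x) ^+ 2 = (t - x) ^+ 2 / 2 + K * (t - x) ^+ 2 / 2 * (3 / g ^+ 2).
  by rewrite /tail_curv; field; rewrite gt_eqF.
have := tail_gapB t x; lra.
Qed.

Lemma hoc_gapE (t : R) : hoc_gap t = if `|t| <= c then 0 else tail_gap t.
Proof. by rewrite /hoc_gap /hoc /tail_gap; case: ifP => _; ring. Qed.

Lemma hoc_argminE (x : R) : hoc_argmin g c x = if `|x| <= c then 0 else tail_slope x.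
Proof.
rewrite /hoc_argmin.
have factorE : `|x| - K * `|x| / (g ^+ 2 + x ^+ 2)
    = `|x| * ((x ^+ 2 - c ^+ 2) / (g ^+ 2 + x ^+ 2)).
  by field; rewrite gt_eqF ?gD_sqr_gt0.
have Ax := gD_sqr_gt0 x.
rewrite normr_le_sqr //.
have [xc|cx] := leP (x ^+ 2) (c ^+ 2).
  rewrite max_l ?mul0r // factorE mulr_ge0_le0 // mulr_le0_ge0 ?subr_le0 //.
  by rewrite invr_ge0 ltW.
rewrite max_r; last by rewrite factorE mulr_ge0 ?divr_ge0 ?subr_ge0 // ltW.
have sgx : `|x| * Num.sg x = x by rewrite mulrC -numEsg.
rewrite /tail_slope mulrBl sgx [K * _ / _ * _]mulrAC.
by rewrite -(mulrA _ `|x|) sgx.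
Qed.

Lemma hoc_gap_subgradient (x t : R) :
  hoc_gap x + hoc_argmin g c x * (t - x) <= hoc_gap t.
Proof.
rewrite !hoc_gapE hoc_argminE !normr_le_sqr //.
have [xc|cx] := leP (x ^+ 2) (c ^+ 2); have [tc|ct] := leP (t ^+ 2) (c ^+ 2).
- by rewrite mul0r addr0.
- by rewrite mul0r addr0 tail_gap_ge0.
- (* affine in t, so on [-c, c] bounded by its values at +-c, which are <= 0 *)
  have /andP[ct1 ct2] : -c <= t <= c by rewrite -ler_norml normr_le_sqr.
  have := tail_gap_subgradient c (ltW cx); rewrite (tail_gap_c (erefl (c ^+ 2))).
  have := tail_gap_subgradient (-c) (ltW cx); rewrite (tail_gap_c (sqrrN c)).
  nra.
- exact: (tail_gap_subgradient t (ltW cx)).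
Qed.

Lemma hoc_gap_upper (x t : R) :
  hoc_gap t <= hoc_gap x + hoc_argmin g c x * (t - x) + tail_curv * (t - x) ^+ 2.
Proof.
have curv_sq_ge0 := mulr_ge0 (ltW tail_curv_gt0) (sqr_ge0 (t - x)).
rewrite !hoc_gapE hoc_argminE !normr_le_sqr //.
have [xc|cx] := leP (x ^+ 2) (c ^+ 2); have [tc|ct] := leP (t ^+ 2) (c ^+ 2).
- by rewrite mul0r !add0r.
- have [x0 [x0E x0_closer]] : exists x0, x0 ^+ 2 = c ^+ 2 /\ (t - x0) ^+ 2 <= (t - x) ^+ 2.
    have /andP[cx1 cx2] : -c <= x <= c by rewrite -ler_norml normr_le_sqr.
    have [t_ge0|t_lt0] := leP 0 t.
      have t_gt : c < t by nra.
      exists c; split => //.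
      have : 0 <= (c - x) * (2 * t - x - c) by apply: mulr_ge0; lra.
      nra.
    have t_lt : t < - c by nra.
    exists (-c); split; first by rewrite sqrrN.
    have : 0 <= (c + x) * (x - c - 2 * t) by apply: mulr_ge0; lra.
    nra.
  have := tail_gap_upper t x0; rewrite (tail_gap_c x0E) (tail_slope_c x0E).
  have := ler_wpM2l (ltW tail_curv_gt0) x0_closer.
  rewrite !mul0r !add0r; lra.
- exact: le_trans (tail_gap_ge0 t) (tail_gap_upper t x).
- exact: tail_gap_upper.
Qed.

End HOC.

Theorem mainTheorem2 (R : realType) (gamma c : R) (hc : 0 < c) (hg : 0 < gamma) (x : R) :
  ((((x - hoc_argmin gamma c x) ^+ 2 / 2)%:E + hoc_reg gamma c (hoc_argmin gamma c x))
     = (hoc gamma c x)%:E)%E /\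
  (forall y : R, y <> hoc_argmin gamma c x ->
     ((hoc gamma c x)%:E < ((x - y) ^+ 2 / 2)%:E + hoc_reg gamma c y)%E).
Proof.
split; first exact: prox_reg_subgradient (hoc_gap_subgradient hg hc x).
exact: prox_reg_strict (tail_curv_gt0 c hg) (hoc_gap_upper hg hc x).
Qed.
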